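(* Let $c_1,\dots,c_n$ be elements of a partial ring $A$ and let $S=\{s_1,\dots,s_r\}$ be a subset of $\mathbb{N}[x_1,\dots,x_n]$. If $s_i(c_1,\dots,c_n)$ can be calculated in $A$ for all $i=1,\dots,r$, then there exists a unique partial ring homomorphism $\varphi\colon \mathbb{F}_1\langle x_1,\dots,x_n\mid \exists s_1,\dots,s_r\rangle\to A$ such that $\varphi(x_i)=c_i$ for $i=1,\dots,n$.
   Context: A partial magma is a set $A$ with a distinguished element $0$, a subset $A_2\subseteq A\times A$ of summable pairs and a map $+\colon A_2\to A$, such that $(0,a),(a,0)\in A_2$ and $a+0=0+a=a$, and $(a,b)\in A_2$ implies $(b,a)\in A_2$ and $a+b=b+a$. It is a partial monoid if, for all $a,b,c$: $(a,b),(a+b,c)\in A_2$ iff $(b,c),(a,b+c)\in A_2$, and then $(a+b)+c=a+(b+c)$. A partial ring is a partial monoid with a commutative associative multiplication with unit $1$ such that $0\cdot a=0$ and $(a_1,a_2)\in A_2$ implies $(a_1x,a_2x)\in A_2$ and $(a_1+a_2)x=a_1x+a_2x$. Partial ring homomorphisms preserve $0,1$, products, summability and sums. An $s$-tuple $(a_1,\dots,a_s)$ is summable, written $\in A_s$, if the sum $a_1+\dots+a_s$ can be calculated in $A$. Let $N=\mathbb{N}[x_1,\dots,x_n]$ (polynomials with coefficients in $\mathbb{N}$), regarded as a partial ring in which all pairs are summable. $\mathbb{F}_1\langle x_1,\dots,x_n\mid\exists s_1,\dots,s_r\rangle$ denotes the smallest partial subring of $N$ which contains every subsum of each $s_j$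 and in which every pair $(a,b)$ with $a+b$ a subsum of some $s_j$ is summable (a subsum of a polynomial means a sum of a sub-multiset of the monomials, with coefficient $1$, in its unique decomposition as a sum of such monomials). For $s\in N$ with unique decomposition $s=m_1+\dots+m_t$ into monomials with coefficient $1$, we say $s(c_1,\dots,c_n)$ can be calculated in $A$ if $(m_{i_1}(c),\dots,m_{i_u}(c))\in A_u$ for every subset $\{i_1,\dots,i_u\}\subseteq\{1,\dots,t\}$, where $m(c)$ is the value of the monomial at $(c_1,\dots,c_n)$. *)

From HB Require Import structures.
From mathcomp Require Import all_boot all_order all_algebra.
From mathcomp Require Import mpoly.
From Stdlib Require Import ProofIrrelevance ClassicalDescription.

Set Implicit Arguments.
Unset Strict Implicit.
Unset Printing Implicit Defensive.

Import Order.TTheory GRing.Theory Num.Theory.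
Local Open Scope ring_scope.

(* Partial rings.  The partial addition  + : A_2 -> A  is encoded as a  *)
(* total function [pr_add] whose values outside the summable pairs are *)
(* irrelevant (all axioms / morphism conditions only use it on A_2).   *)
Record partial_ring := PartialRing {
  pr_car :> Type;
  pr_zero : pr_car;
  pr_one : pr_car;
  pr_summable : pr_car -> pr_car -> Prop;
  pr_add : pr_car -> pr_car -> pr_car;
  pr_mul : pr_car -> pr_car -> pr_car;
  pr_summable0l : forall a, pr_summable pr_zero a;
  pr_summable0r : forall a, pr_summable a pr_zero;
  pr_add0r : forall a, pr_add a pr_zero = a;
  pr_add0l : forall a, pr_add pr_zero a = a;
  pr_summableC : forall a b, pr_summable a b -> pr_summable b a;
  pr_addC : forall a b, pr_summable a b -> pr_add a b = pr_add b a;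
  pr_summableA : forall a b c,
    (pr_summable a b /\ pr_summable (pr_add a b) c) <->
    (pr_summable b c /\ pr_summable a (pr_add b c));
  pr_addA : forall a b c,
    pr_summable a b -> pr_summable (pr_add a b) c ->
    pr_add (pr_add a b) c = pr_add a (pr_add b c);
  pr_mulA : forall a b c, pr_mul (pr_mul a b) c = pr_mul a (pr_mul b c);
  pr_mulC : forall a b, pr_mul a b = pr_mul b a;
  pr_mul1l : forall a, pr_mul pr_one a = a;
  pr_mul0l : forall a, pr_mul pr_zero a = pr_zero;
  pr_summableM : forall a1 a2 x,
    pr_summable a1 a2 -> pr_summable (pr_mul a1 x) (pr_mul a2 x);
  pr_mulDl : forall a1 a2 x, pr_summable a1 a2 ->
    pr_mul (pr_add a1 a2) x = pr_add (pr_mul a1 x) (pr_mul a2 x)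
}.

Definition pr_hom (A B : partial_ring) (f : A -> B) : Prop :=
  [/\ f (pr_zero A) = pr_zero B,
      f (pr_one A) = pr_one B,
      (forall a b, f (pr_mul a b) = pr_mul (f a) (f b)) &
      (forall a b, pr_summable a b ->
         pr_summable (f a) (f b) /\ f (pr_add a b) = pr_add (f a) (f b))].

(* (a_1, ..., a_s) \in A_s : the sum a_1 + ... + a_s can be calculated,  *)
(* i.e. each successive partial sum is summable with the next term.     *)
Fixpoint pr_summable_from (A : partial_ring) (acc : A) (l : seq A) : Prop :=
  match l with
  | [::] => True
  | a :: l' => pr_summable acc a /\ pr_summable_from (pr_add acc a) l'
  end.

Definition pr_summable_seq (A : partial_ring) (l : seq A) : Prop :=
  match l with
  | [::] => True
  | a :: l' => pr_summable_from a l'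
  end.

Definition pr_pow (A : partial_ring) (x : A) (k : nat) : A :=
  iter k (pr_mul x) (pr_one A).

Definition mon_eval (A : partial_ring) (n : nat) (c : 'I_n -> A)
    (m : 'X_{1..n}) : A :=
  \big[@pr_mul A / pr_one A]_(i < n) pr_pow (c i) (m i).

(* N = N[x_1, ..., x_n] : polynomials with integer coefficients all    *)
(* of which are nonnegative.                                           *)
Definition isN (n : nat) (p : {mpoly int[n]}) : Prop := forall m, 0 <= p@_m.

(* The unique decomposition of s as a sum of monomials with coefficient *)
(* 1 (each monomial m repeated s@_m times).                             *)
Definition mon_list (n : nat) (s : {mpoly int[n]}) : seq 'X_{1..n} :=
  flatten [seq nseq `|s@_m|%N m | m <- msupp s].

(* s(c_1,...,c_n) can be calculated in A: every sub-tuple of the values *)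
(* of the monomials of s is summable.                                   *)
Definition calculable (A : partial_ring) (n : nat) (c : 'I_n -> A)
    (s : {mpoly int[n]}) : Prop :=
  forall b : bitseq, size b = size (mon_list s) ->
    pr_summable_seq (mask b [seq mon_eval c m | m <- mon_list s]).

(* q is a subsum of s: a sum of a sub-multiset of the monomials of s. *)
Definition subsum (n : nat) (q s : {mpoly int[n]}) : Prop :=
  forall m, 0 <= q@_m <= s@_m.

(* (B, B2) is a partial subring of N (all pairs of N are summable). *)
Definition partial_subring (n : nat) (B : {mpoly int[n]} -> Prop)
    (B2 : {mpoly int[n]} -> {mpoly int[n]} -> Prop) : Prop :=
  [/\ (forall p, B p -> isN p),
      (B 0 /\ B 1),
      (forall p q, B p -> B q -> B (p * q)),
      (forall p q, B2 p q -> [/\ B p, B q & B (p + q)]) &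
      [/\ (forall p, B p -> B2 0 p /\ B2 p 0),
      (forall p q, B2 p q -> B2 q p),
      (forall a b c, B a -> B b -> B c ->
         (B2 a b /\ B2 (a + b) c) <-> (B2 b c /\ B2 a (b + c))) &
      (forall a b x, B2 a b -> B x -> B2 (a * x) (b * x))]].

Definition F1_gens (n : nat) (S : seq {mpoly int[n]})
    (B : {mpoly int[n]} -> Prop)
    (B2 : {mpoly int[n]} -> {mpoly int[n]} -> Prop) : Prop :=
  [/\ (forall i : 'I_n, B 'X_i),
      (forall s q, s \in S -> subsum q s -> B q) &
      (forall s a b, s \in S -> isN a -> isN b -> subsum (a + b) s -> B2 a b)].

Definition inF1 (n : nat) (S : seq {mpoly int[n]}) (p : {mpoly int[n]}) :=
  forall B B2, partial_subring B B2 -> F1_gens S B B2 -> B p.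

Definition sumF1 (n : nat) (S : seq {mpoly int[n]}) (p q : {mpoly int[n]}) :=
  forall B B2, partial_subring B B2 -> F1_gens S B B2 -> B2 p q.

Section F1.
Variables (n : nat) (S : seq {mpoly int[n]}).

Definition F1_car := {p : {mpoly int[n]} | inF1 S p}.

Lemma F1_sval_inj (x y : F1_car) : sval x = sval y -> x = y.
Proof.
case: x => x hx; case: y => y hy /= exy; subst y.
by rewrite (proof_irrelevance _ hx hy).
Qed.

Lemma inF1_0 : inF1 S 0. Proof. by move=> B B2 [_ [h0 h1] _ _ _]. Qed.
Lemma inF1_1 : inF1 S 1. Proof. by move=> B B2 [_ [h0 h1] _ _ _]. Qed.
Lemma inF1_M p q : inF1 S p -> inF1 S q -> inF1 S (p * q).
Proof. by move=> hp hq B B2 hB hG; case: (hB) => _ _ hM _ _; apply: hM; [exact: (hp B B2 hB hG)|exact: (hq B B2 hB hG)]. Qed.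
Lemma sumF1_in p q : sumF1 S p q -> inF1 S (p + q).
Proof. move=> h B B2 hB hG; case: (hB) => _ _ _ hs _; case: (hs p q (h B B2 hB hG)) => _ _ H; exact: H. Qed.
Lemma sumF1_inl p q : sumF1 S p q -> inF1 S p.
Proof. move=> h B B2 hB hG; case: (hB) => _ _ _ hs _; case: (hs p q (h B B2 hB hG)) => H _ _; exact: H. Qed.
Lemma sumF1_inr p q : sumF1 S p q -> inF1 S q.
Proof. move=> h B B2 hB hG; case: (hB) => _ _ _ hs _; case: (hs p q (h B B2 hB hG)) => _ H _; exact: H. Qed.

Definition F1_zero : F1_car := exist _ 0 inF1_0.
Definition F1_one : F1_car := exist _ 1 inF1_1.
Definition F1_mul (x y : F1_car) : F1_car :=
  exist _ (sval x * sval y) (inF1_M (proj2_sig x) (proj2_sig y)).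
Definition F1_summable (x y : F1_car) : Prop := sumF1 S (sval x) (sval y).
Definition F1_add (x y : F1_car) : F1_car :=
  match excluded_middle_informative (inF1 S (sval x + sval y)) with
  | left h => exist _ (sval x + sval y) h
  | right _ => F1_zero
  end.

Lemma F1_addE x y : inF1 S (sval x + sval y) -> sval (F1_add x y) = sval x + sval y.
Proof. by move=> h; rewrite /F1_add; case: excluded_middle_informative. Qed.

Lemma F1_summable0l a : F1_summable F1_zero a.
Proof. by move=> B B2 hB hG; case: (hB) => _ _ _ _ [h0 _ _ _]; case: (h0 _ (proj2_sig a B B2 hB hG)). Qed.
Lemma F1_summable0r a : F1_summable a F1_zero.
Proof. by move=> B B2 hB hG; case: (hB) => _ _ _ _ [h0 _ _ _]; case: (h0 _ (proj2_sig a B B2 hB hG)). Qed.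
Lemma F1_add0r a : F1_add a F1_zero = a.
Proof. by apply: F1_sval_inj; rewrite F1_addE /= addr0 //; apply: proj2_sig. Qed.
Lemma F1_add0l a : F1_add F1_zero a = a.
Proof. by apply: F1_sval_inj; rewrite F1_addE /= add0r //; apply: proj2_sig. Qed.
Lemma F1_summableC a b : F1_summable a b -> F1_summable b a.
Proof. by move=> h B B2 hB hG; case: (hB) => _ _ _ _ [_ hC _ _]; apply: hC; exact: (h B B2 hB hG). Qed.
Lemma F1_addC a b : F1_summable a b -> F1_add a b = F1_add b a.
Proof.
move=> h; have hab := sumF1_in h.
have hba : inF1 S (sval b + sval a) by rewrite addrC.
apply: F1_sval_inj; rewrite (F1_addE hab) (F1_addE hba).
exact: addrC.
Qed.
Lemma F1_summableA a b c :
  (F1_summable a b /\ F1_summable (F1_add a b) c) <->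
  (F1_summable b c /\ F1_summable a (F1_add b c)).
Proof.
split=> -[h1 h2].
- have e : sval (F1_add a b) = sval a + sval b by rewrite F1_addE //; exact: sumF1_in.
  move: h2; rewrite /F1_summable e => h2.
  have H : forall B B2, partial_subring B B2 -> F1_gens S B B2 ->
     B2 (sval b) (sval c) /\ B2 (sval a) (sval b + sval c).
    move=> B B2 hB hG; case: (hB) => _ _ _ _ [_ _ hA _].
    apply: (proj1 (hA _ _ _ (proj2_sig a B B2 hB hG) (proj2_sig b B B2 hB hG) (proj2_sig c B B2 hB hG))).
    by split; [exact: (h1 B B2 hB hG)|exact: (h2 B B2 hB hG)].
  have hbc : F1_summable b c by move=> B B2 hB hG; case: (H B B2 hB hG).
  split=> //; rewrite /F1_summable F1_addE; last exact: sumF1_in.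
  by move=> B B2 hB hG; case: (H B B2 hB hG).
- have e : sval (F1_add b c) = sval b + sval c by rewrite F1_addE //; exact: sumF1_in.
  move: h2; rewrite /F1_summable e => h2.
  have H : forall B B2, partial_subring B B2 -> F1_gens S B B2 ->
     B2 (sval a) (sval b) /\ B2 (sval a + sval b) (sval c).
    move=> B B2 hB hG; case: (hB) => _ _ _ _ [_ _ hA _].
    apply: (proj2 (hA _ _ _ (proj2_sig a B B2 hB hG) (proj2_sig b B B2 hB hG) (proj2_sig c B B2 hB hG))).
    by split; [exact: (h1 B B2 hB hG)|exact: (h2 B B2 hB hG)].
  have hab : F1_summable a b by move=> B B2 hB hG; case: (H B B2 hB hG).
  split=> //; rewrite /F1_summable F1_addE; last exact: sumF1_in.
  by move=> B B2 hB hG; case: (H B B2 hB hG).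
Qed.
Lemma F1_addA a b c : F1_summable a b -> F1_summable (F1_add a b) c ->
  F1_add (F1_add a b) c = F1_add a (F1_add b c).
Proof.
move=> h1 h2; have [h3 h4] := proj1 (F1_summableA a b c) (conj h1 h2).
apply: F1_sval_inj.
rewrite (F1_addE (sumF1_in h2)) (F1_addE (sumF1_in h4)).
by rewrite !F1_addE ?addrA //; [exact: sumF1_in|exact: sumF1_in].
Qed.
Lemma F1_mulA a b c : F1_mul (F1_mul a b) c = F1_mul a (F1_mul b c).
Proof. by apply: F1_sval_inj; rewrite /= mulrA. Qed.
Lemma F1_mulC a b : F1_mul a b = F1_mul b a.
Proof. by apply: F1_sval_inj; rewrite /= mulrC. Qed.
Lemma F1_mul1l a : F1_mul F1_one a = a.
Proof. by apply: F1_sval_inj; rewrite /= mul1r. Qed.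
Lemma F1_mul0l a : F1_mul F1_zero a = F1_zero.
Proof. by apply: F1_sval_inj; rewrite /= mul0r. Qed.
Lemma F1_summableM a1 a2 x :
  F1_summable a1 a2 -> F1_summable (F1_mul a1 x) (F1_mul a2 x).
Proof.
move=> h B B2 hB hG; case: (hB) => _ _ _ _ [_ _ _ hM].
by apply: hM; [exact: (h B B2 hB hG)|exact: (proj2_sig x B B2 hB hG)].
Qed.
Lemma F1_mulDl a1 a2 x : F1_summable a1 a2 ->
  F1_mul (F1_add a1 a2) x = F1_add (F1_mul a1 x) (F1_mul a2 x).
Proof.
move=> h; have h' := F1_summableM x h.
apply: F1_sval_inj; rewrite /= (F1_addE (sumF1_in h')) /=.
by rewrite F1_addE ?mulrDl //; exact: sumF1_in.
Qed.

Definition F1 : partial_ring :=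
  @PartialRing F1_car F1_zero F1_one F1_summable F1_add F1_mul
    F1_summable0l F1_summable0r F1_add0r F1_add0l F1_summableC F1_addC
    F1_summableA F1_addA F1_mulA F1_mulC F1_mul1l F1_mul0l
    F1_summableM F1_mulDl.

Lemma inF1_X (i : 'I_n) : inF1 S 'X_i.
Proof. by move=> B B2 _ [hX _ _]. Qed.

Definition F1_var (i : 'I_n) : F1 := exist _ 'X_i (inF1_X i).

End F1.

(* The homomorphism sends p to the sum in A of the values at c of the
   monomials of p, counted with multiplicity.  By generalized associativity and
   commutativity of partial monoids this sum does not depend on the order of
   the monomials, and distributivity makes it multiplicative.  The polynomials
   of N whose monomial values are summable, together with the pairs whose sum
   has this property, form a partial subring of N; calculability of the s_j
   says exactly that it satisfies the generating conditions, so it contains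
   F_1<x | exists s>, where the map is therefore defined.  Uniqueness holds
   because F_1<x | exists s> is generated by the x_i under products and sums
   of summable pairs: every subsum of an s_j is such an iterated sum of
   monomials. *)

From HB Require Import structures.
From mathcomp Require Import all_boot all_order all_algebra.
From mathcomp Require Import mpoly.

Set Implicit Arguments.
Unset Strict Implicit.
Unset Printing Implicit Defensive.

Import Order.TTheory GRing.Theory Num.Theory.
Local Open Scope ring_scope.

Section PartialSums.
Variable A : partial_ring.
Implicit Types (a b x acc : A) (l u v : seq A).

Local Notation zero := (pr_zero A).
Local Notation summable := (@pr_summable A).
Local Notation add := (@pr_add A).
Local Notation mul := (@pr_mul A).

Definition pr_sum l : A := foldl add zero l.

Lemma pr_summable_seqE l : pr_summable_seq l <-> pr_summable_from zero l.
Proof.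
case: l => [|a l] //=; rewrite pr_add0l; split=> [h|[] //].
by split=> //; apply: pr_summable0l.
Qed.

Lemma pr_summable_from_cat acc l1 l2 :
  pr_summable_from acc (l1 ++ l2) <->
  pr_summable_from acc l1 /\ pr_summable_from (foldl add acc l1) l2.
Proof. by elim: l1 acc => [|a l1 IH] acc /=; [tauto | rewrite IH; tauto]. Qed.

Lemma pr_summable_from_sum l acc :
  (pr_summable_from acc l <-> pr_summable_seq l /\ summable acc (pr_sum l)) /\
  (pr_summable_from acc l -> foldl add acc l = add acc (pr_sum l)).
Proof.
elim: l acc => [|a l IH] acc /=.
  by rewrite pr_add0r; split=> //; split=> // _; split=> //; apply: pr_summable0r.
rewrite /pr_sum /= pr_add0l -/(pr_sum _).
have [IHa eqa] := IH a; have [IHacc eqacc] := IH (add acc a).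
split; first split.
- move=> [acc_a /IHacc [sl acca_l]].
  have [a_l acc_al] := proj1 (pr_summableA acc a (pr_sum l)) (conj acc_a acca_l).
  have al : pr_summable_from a l by apply/IHa.
  by rewrite eqa.
- move=> [al]; rewrite (eqa al) => acc_al; have [sl a_l] := proj1 IHa al.
  have [acc_a acca_l] := proj2 (pr_summableA acc a (pr_sum l)) (conj a_l acc_al).
  by split=> //; apply/IHacc.
move=> [acc_a acca_l]; have [sl acca_l'] := proj1 IHacc acca_l.
have [a_l _] := proj1 (pr_summableA acc a (pr_sum l)) (conj acc_a acca_l').
by rewrite eqacc // pr_addA // eqa //; apply/IHa.
Qed.

Lemma pr_summable_fromE acc l :
  pr_summable_from acc l <-> pr_summable_seq l /\ summable acc (pr_sum l).
Proof. exact: (proj1 (pr_summable_from_sum l acc)). Qed.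

Lemma foldl_pr_addE acc l :
  pr_summable_from acc l -> foldl add acc l = add acc (pr_sum l).
Proof. exact: (proj2 (pr_summable_from_sum l acc)). Qed.

Lemma pr_summable_seq_cons a l :
  pr_summable_seq (a :: l) <-> pr_summable_seq l /\ summable a (pr_sum l).
Proof. exact: pr_summable_fromE. Qed.

Lemma pr_sum_cons a l :
  pr_summable_seq (a :: l) -> pr_sum (a :: l) = add a (pr_sum l).
Proof. by rewrite /pr_sum /= pr_add0l; apply: foldl_pr_addE. Qed.

Lemma pr_summable_seq_cat l1 l2 :
  pr_summable_seq (l1 ++ l2) <->
  [/\ pr_summable_seq l1, pr_summable_seq l2 & summable (pr_sum l1) (pr_sum l2)].
Proof.
split=> [/pr_summable_seqE /pr_summable_from_cat [s1 /pr_summable_fromE [s2 s12]]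
         |[/pr_summable_seqE s1 s2 s12]].
  by split=> //; apply/pr_summable_seqE.
by apply/pr_summable_seqE/pr_summable_from_cat; split=> //; apply/pr_summable_fromE.
Qed.

Lemma pr_sum_cat l1 l2 : pr_summable_seq (l1 ++ l2) ->
  pr_sum (l1 ++ l2) = add (pr_sum l1) (pr_sum l2).
Proof.
move=> /pr_summable_seqE /pr_summable_from_cat [_ s2].
by rewrite /pr_sum foldl_cat foldl_pr_addE.
Qed.

Lemma pr_summable_seq_swap a b l : pr_summable_seq (a :: b :: l) ->
  pr_summable_seq (b :: a :: l) /\ pr_sum (a :: b :: l) = pr_sum (b :: a :: l).
Proof.
move=> sabl; have [sbl a_bl] := proj1 (pr_summable_seq_cons _ _) sabl.
have [sl b_l] := proj1 (pr_summable_seq_cons _ _) sbl.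
rewrite (pr_sum_cons sbl) in a_bl.
have [ab ab_l] := proj2 (pr_summableA a b (pr_sum l)) (conj b_l a_bl).
have ba_l : summable (add b a) (pr_sum l) by rewrite -(pr_addC ab).
have [a_l b_al] := proj1 (pr_summableA b a (pr_sum l)) (conj (pr_summableC ab) ba_l).
have sal : pr_summable_seq (a :: l) by apply/pr_summable_seq_cons.
have sbal : pr_summable_seq (b :: a :: l).
  by apply/pr_summable_seq_cons; rewrite pr_sum_cons.
split=> //; rewrite !pr_sum_cons // -!pr_addA ?(pr_addC ab) //.
exact: pr_summableC.
Qed.

Lemma pr_summable_seq_move a l1 l2 : pr_summable_seq (a :: l1 ++ l2) ->
  pr_summable_seq (l1 ++ a :: l2) /\ pr_sum (a :: l1 ++ l2) = pr_sum (l1 ++ a :: l2).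
Proof.
elim: l1 => [|x l1 IH] //= saxl.
have [sxal eq_axl] := pr_summable_seq_swap saxl.
have [sal x_al] := proj1 (pr_summable_seq_cons _ _) sxal.
have [sla eq_al] := IH sal.
have sxla : pr_summable_seq (x :: l1 ++ a :: l2).
  by apply/pr_summable_seq_cons; rewrite -eq_al.
by split=> //; rewrite eq_axl (pr_sum_cons sxal) (pr_sum_cons sxla) eq_al.
Qed.

Lemma pr_summable_seq_perm (T : eqType) (f : T -> A) (s t : seq T) :
  perm_eq s t -> pr_summable_seq (map f s) ->
  pr_summable_seq (map f t) /\ pr_sum (map f s) = pr_sum (map f t).
Proof.
elim: s t => [|a s IH] t; first by move=> /perm_size /esym /size0nil ->.
move=> st; have : a \in t by rewrite -(perm_mem st) mem_head.
move: st => /[swap] /splitPr [t1 t2].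
rewrite perm_sym -cat1s perm_catCA /= perm_cons perm_sym => /IH {}IH sas.
have [ss a_s] := proj1 (pr_summable_seq_cons _ _) sas.
have [st' eq_st] := IH ss; rewrite !map_cat /= in st' eq_st *.
have sat : pr_summable_seq (f a :: map f t1 ++ map f t2).
  by apply/pr_summable_seq_cons; rewrite -eq_st.
have [sta <-] := pr_summable_seq_move sat.
by split=> //; rewrite !pr_sum_cons // eq_st.
Qed.

Lemma pr_summable_seq_mulr x v : pr_summable_seq v ->
  pr_summable_seq [seq mul y x | y <- v] /\
  pr_sum [seq mul y x | y <- v] = mul (pr_sum v) x.
Proof.
elim: v => [|a v IH] /=; first by rewrite /pr_sum /= pr_mul0l.
move=> sav; have [sv a_v] := proj1 (pr_summable_seq_cons _ _) sav.
have [svx eq_vx] := IH sv.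
have sxav : pr_summable_seq (mul a x :: [seq mul y x | y <- v]).
  by apply/pr_summable_seq_cons; rewrite eq_vx; split=> //; apply: pr_summableM.
by split=> //; rewrite !pr_sum_cons // eq_vx pr_mulDl.
Qed.

Lemma pr_summable_seq_allpairs u v :
  pr_summable_seq u -> pr_summable_seq v ->
  pr_summable_seq [seq mul x y | x <- u, y <- v] /\
  pr_sum [seq mul x y | x <- u, y <- v] = mul (pr_sum u) (pr_sum v).
Proof.
move=> + sv; elim: u => [|x u IH] /=; first by rewrite /pr_sum /= pr_mul0l.
move=> sxu; have [su x_u] := proj1 (pr_summable_seq_cons _ _) sxu.
have [suv eq_uv] := IH su.
have [sxv eq_xv] := pr_summable_seq_mulr x sv.
have eq_map_mulC : [seq mul y x | y <- v] = [seq mul x y | y <- v].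
  by apply: eq_map => y; rewrite pr_mulC.
rewrite eq_map_mulC in sxv eq_xv.
have x_u_v := pr_summableM (pr_sum v) x_u.
have sxuv : pr_summable_seq ([seq mul x y | y <- v] ++ [seq mul x y | x <- u, y <- v]).
  by apply/pr_summable_seq_cat; rewrite eq_xv eq_uv pr_mulC.
by split=> //; rewrite pr_sum_cat // eq_xv eq_uv pr_sum_cons // pr_mulDl // pr_mulC.
Qed.

End PartialSums.

Section MonomialEvaluation.
Variables (A : partial_ring) (n : nat) (c : 'I_n -> A).

HB.instance Definition _ := Monoid.isComLaw.Build A (pr_one A) (@pr_mul A)
  (fun a b d => esym (pr_mulA a b d)) (@pr_mulC A) (@pr_mul1l A).

Lemma pr_powD (x : A) k l : pr_pow x (k + l) = pr_mul (pr_pow x k) (pr_pow x l).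
Proof.
elim: k => [|k IH]; first by rewrite pr_mul1l.
by rewrite addSn /pr_pow /= -!/(pr_pow _ _) IH pr_mulA.
Qed.

Lemma mon_eval0 : mon_eval c 0%MM = pr_one A.
Proof. by rewrite /mon_eval big1 // => i _; rewrite mnm0E. Qed.

Lemma mon_evalD m1 m2 :
  mon_eval c (m1 + m2)%MM = pr_mul (mon_eval c m1) (mon_eval c m2).
Proof.
by rewrite /mon_eval -big_split /=; apply: eq_bigr => i _; rewrite mnmDE pr_powD.
Qed.

Lemma mon_evalU i : mon_eval c U_(i)%MM = c i.
Proof.
rewrite /mon_eval (bigD1 i) //= big1 => [|j ne_ji]; last first.
  by rewrite mnm1E eq_sym (negbTE ne_ji).
by rewrite mnm1E eqxx /pr_pow /= !(pr_mulC _ (pr_one A)) !pr_mul1l.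
Qed.

End MonomialEvaluation.

Section MonomialLists.
Variable n : nat.
Implicit Types (p q s : {mpoly int[n]}) (l : seq 'X_{1..n}).

Definition mpoly_of_mons l : {mpoly int[n]} := \sum_(m <- l) 'X_[m].

Lemma mpoly_of_mons_cons m l : mpoly_of_mons (m :: l) = 'X_[m] + mpoly_of_mons l.
Proof. exact: big_cons. Qed.

Lemma mcoeff_mpoly_of_mons l m : (mpoly_of_mons l)@_m = (count_mem m l)%:R.
Proof.
elim: l => [|m' l IH]; first by rewrite /mpoly_of_mons big_nil mcoeff0.
by rewrite mpoly_of_mons_cons mcoeffD mcoeffX IH /= natrD; case: (m' == m).
Qed.

Lemma count_flatten_nseq (T : eqType) (f : T -> nat) (s : seq T) x :
  uniq s ->
  count_mem x (flatten [seq nseq (f y) y | y <- s]) = if x \in s then f x else 0%N.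
Proof.
elim: s => [|y s IH] //= /andP [ys us]; rewrite count_cat count_nseq IH // in_cons /=.
by case: (eqVneq y x) => [<-|_] //=; rewrite (negbTE ys) mul1n addn0.
Qed.

Lemma count_mon_list p m : count_mem m (mon_list p) = `|p@_m|%N.
Proof.
rewrite count_flatten_nseq ?msupp_uniq // mcoeff_msupp.
by case: eqP => // ->.
Qed.

Lemma isN0 : isN (0 : {mpoly int[n]}).
Proof. by move=> m; rewrite mcoeff0. Qed.

Lemma isNX m : isN ('X_[m] : {mpoly int[n]}).
Proof. by move=> m'; rewrite mcoeffX ler0n. Qed.

Lemma isND p q : isN p -> isN q -> isN (p + q).
Proof. by move=> hp hq m; rewrite mcoeffD addr_ge0. Qed.

Lemma isN_mpoly_of_mons l : isN (mpoly_of_mons l).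
Proof. by move=> m; rewrite mcoeff_mpoly_of_mons ler0n. Qed.

Lemma mon_listK p : isN p -> mpoly_of_mons (mon_list p) = p.
Proof.
move=> hp; apply/mpolyP => m.
by rewrite mcoeff_mpoly_of_mons count_mon_list natz gez0_abs.
Qed.

Lemma perm_mon_list_of_mons l : perm_eq (mon_list (mpoly_of_mons l)) l.
Proof.
by apply/allP => m _; apply/eqP; rewrite count_mon_list mcoeff_mpoly_of_mons natz absz_nat.
Qed.

Lemma mpoly_of_mons_cat l1 l2 :
  mpoly_of_mons (l1 ++ l2) = mpoly_of_mons l1 + mpoly_of_mons l2.
Proof. exact: big_cat. Qed.

Lemma mpoly_of_mons_allpairs l1 l2 :
  mpoly_of_mons [seq (m1 + m2)%MM | m1 <- l1, m2 <- l2] =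
  mpoly_of_mons l1 * mpoly_of_mons l2.
Proof.
elim: l1 => [|m l1 IH]; first by rewrite /mpoly_of_mons !big_nil mul0r.
rewrite /= mpoly_of_mons_cat IH mpoly_of_mons_cons mulrDl; congr (_ + _).
by rewrite /mpoly_of_mons big_map mulr_sumr; apply: eq_bigr => m' _; rewrite mpolyXD.
Qed.

Lemma isNM p q : isN p -> isN q -> isN (p * q).
Proof.
move=> hp hq; rewrite -(mon_listK hp) -(mon_listK hq) -mpoly_of_mons_allpairs.
exact: isN_mpoly_of_mons.
Qed.

Lemma mon_list0 : mon_list (0 : {mpoly int[n]}) = [::].
Proof. by rewrite /mon_list msupp0. Qed.

Lemma perm_mon_listX m : perm_eq (mon_list ('X_[m] : {mpoly int[n]})) [:: m].
Proof.
have -> : 'X_[m] = mpoly_of_mons [:: m] by rewrite /mpoly_of_mons big_seq1.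
exact: perm_mon_list_of_mons.
Qed.

Lemma perm_mon_listD p q : isN p -> isN q ->
  perm_eq (mon_list (p + q)) (mon_list p ++ mon_list q).
Proof.
move=> hp hq; rewrite -{1}(mon_listK hp) -{1}(mon_listK hq) -mpoly_of_mons_cat.
exact: perm_mon_list_of_mons.
Qed.

Lemma perm_mon_listM p q : isN p -> isN q ->
  perm_eq (mon_list (p * q)) [seq (m1 + m2)%MM | m1 <- mon_list p, m2 <- mon_list q].
Proof.
move=> hp hq; rewrite -{1}(mon_listK hp) -{1}(mon_listK hq) -mpoly_of_mons_allpairs.
exact: perm_mon_list_of_mons.
Qed.

Lemma subsum_isN q s : subsum q s -> isN q.
Proof. by move=> qs m; case/andP: (qs m). Qed.

Lemma subsumD p q s : isN p -> isN q -> subsum (p + q) s -> subsum p s /\ subsum q s.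
Proof.
move=> hp hq pqs; split=> m; case/andP: (pqs m) => _; rewrite mcoeffD => le_pq_s.
- by rewrite hp (le_trans _ le_pq_s) // lerDl.
- by rewrite hq (le_trans _ le_pq_s) // lerDr.
Qed.

Lemma subsum_mask q s : subsum q s ->
  exists2 b : bitseq, size b = size (mon_list s) &
                      perm_eq (mon_list q) (mask b (mon_list s)).
Proof.
move=> qs; apply/count_maskP => m; rewrite !count_mon_list.
by case/andP: (qs m) => q0 qs_m; rewrite -lez_nat !gez0_abs // (le_trans q0 qs_m).
Qed.

End MonomialLists.

Section F1Generation.
Variables (n : nat) (S : seq {mpoly int[n]}).
Implicit Types (a b p q s : {mpoly int[n]}).

Lemma isN_partial_subring : partial_subring (@isN n) (fun p q => isN p /\ isN q).
Proof.
split=> //.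
- by split; [exact: isN0 | rewrite -mpolyX0; exact: isNX].
- exact: isNM.
- by move=> p q [hp hq]; split=> //; exact: isND.
split.
- by move=> p hp; split; split=> //; exact: isN0.
- by move=> p q [].
- by move=> a b c ha hb hc; split=> _; split; split=> //; exact: isND.
- by move=> a b x [ha hb] hx; split; exact: isNM.
Qed.

Lemma isN_F1_gens : F1_gens S (@isN n) (fun p q => isN p /\ isN q).
Proof. by split=> [i | s q _ /subsum_isN | s a b _ ha hb _] //; exact: isNX. Qed.

Lemma inF1_isN p : inF1 S p -> isN p.
Proof. by apply; [exact: isN_partial_subring | exact: isN_F1_gens]. Qed.

Lemma sumF1_subsum s p q :
  s \in S -> isN p -> isN q -> subsum (p + q) s -> sumF1 S p q.
Proof. by move=> sS hp hq pqs B B2 _ [_ _ hsum]; exact: hsum sS hp hq pqs. Qed.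

Lemma sumF1C p q : sumF1 S p q -> sumF1 S q p.
Proof.
move=> pq.
exact: (F1_summableC (a := exist _ p (sumF1_inl pq)) (b := exist _ q (sumF1_inr pq))).
Qed.

Lemma sumF1_mulr p q x : sumF1 S p q -> inF1 S x -> sumF1 S (p * x) (q * x).
Proof.
move=> pq hx.
exact: (F1_summableM (a1 := exist _ p (sumF1_inl pq)) (a2 := exist _ q (sumF1_inr pq))
                     (exist _ x hx)).
Qed.

Lemma sumF1_assoc a b x : inF1 S a -> inF1 S b -> inF1 S x ->
  (sumF1 S a b /\ sumF1 S (a + b) x) <-> (sumF1 S b x /\ sumF1 S a (b + x)).
Proof.
move=> ha hb hx.
have assoc B B2 : partial_subring B B2 -> F1_gens S B B2 ->
    (B2 a b /\ B2 (a + b) x) <-> (B2 b x /\ B2 a (b + x)).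
  move=> hB hG; case: (hB) => _ _ _ _ [_ _ hA _].
  by apply: hA; [exact: ha B B2 hB hG | exact: hb B B2 hB hG | exact: hx B B2 hB hG].
split=> -[h1 h2]; split=> B B2 hB hG;
  move: (h1 B B2 hB hG) (h2 B B2 hB hG) (assoc B B2 hB hG); tauto.
Qed.

Section F1Induction.
Variable P : F1 S -> Prop.
Hypotheses (P0 : P (pr_zero (F1 S))) (P1 : P (pr_one (F1 S)))
  (PX : forall i, P (F1_var S i))
  (PM : forall x y, P x -> P y -> P (pr_mul x y))
  (PD : forall x y, pr_summable x y -> P x -> P y -> P (pr_add x y)).

(* The elements of F1 satisfying P form a partial subring with the generating
   properties, so minimality of F1 gives P everywhere. *)
Let Pp p := exists h : inF1 S p, P (exist _ p h).
Let Pp2 p q := [/\ Pp p, Pp q & sumF1 S p q].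

Let Pp_holds p (h : inF1 S p) : Pp p -> P (exist _ p h).
Proof. by case=> h' Ph'; have -> : exist _ p h = exist _ p h' by apply: F1_sval_inj. Qed.

Let Pp0 : Pp 0. Proof. by exists (@inF1_0 n S). Qed.
Let Pp1 : Pp 1. Proof. by exists (@inF1_1 n S). Qed.

Let PpM p q : Pp p -> Pp q -> Pp (p * q).
Proof. by case=> hp Pp_p [hq Pp_q]; exists (inF1_M hp hq); exact: (PM Pp_p Pp_q). Qed.

Let PpD p q : Pp2 p q -> Pp (p + q).
Proof.
case=> [[hp Pp_p] [hq Pp_q] pq]; exists (sumF1_in pq).
have -> : exist _ (p + q) (sumF1_in pq) = pr_add (exist _ p hp : F1 S) (exist _ q hq).
  by apply: F1_sval_inj; rewrite /= F1_addE //; exact: sumF1_in.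
exact: PD.
Qed.

Let PpX m : Pp 'X_[m].
Proof.
rewrite mpolyXE_id; apply: (big_ind Pp) => [|p q|i _]; [exact: Pp1 | exact: PpM |].
elim: (m i) => [|k IH]; first by rewrite expr0; exact: Pp1.
by rewrite exprS; apply: PpM IH; exists (@inF1_X n S i); exact: PX.
Qed.

Let Pp_subsum s q : s \in S -> subsum q s -> Pp q.
Proof.
move=> sS qs.
have Pp_mons l : subsum (mpoly_of_mons l) s -> Pp (mpoly_of_mons l).
  elim: l => [|m l IH]; first by rewrite /mpoly_of_mons big_nil.
  have [hm hl] := (isNX m, isN_mpoly_of_mons l).
  rewrite mpoly_of_mons_cons => mls; have [_ ls] := subsumD hm hl mls.
  by apply: PpD; split; [exact: PpX | exact: IH | exact: sumF1_subsum sS hm hl mls].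
by have hq := subsum_isN qs; rewrite -(mon_listK hq) in qs *; exact: Pp_mons.
Qed.

Let Pp_partial_subring : partial_subring Pp Pp2.
Proof.
split.
- by move=> p [hp _]; exact: inF1_isN.
- by split; [exact: Pp0 | exact: Pp1].
- exact: PpM.
- by move=> p q Pp_pq; case: (Pp_pq) => Pp_p Pp_q _; split=> //; exact: PpD.
split.
- move=> p Pp_p; case: (Pp_p) => hp _.
  split; split=> //; [exact: (F1_summable0l (exist _ p hp : F1 S)) |
                      exact: (F1_summable0r (exist _ p hp : F1 S))].
- by move=> p q [Pp_p Pp_q pq]; split=> //; exact: sumF1C.
- move=> a b x Pp_a Pp_b Pp_x.
  case: (Pp_a) (Pp_b) (Pp_x) => ha _ [hb _] [hx _].
  split=> -[[_ _ s1] [_ _ s2]].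
  + have [bx a_bx] := proj1 (sumF1_assoc ha hb hx) (conj s1 s2).
    by split; split=> //; apply: PpD.
  + have [ab ab_x] := proj2 (sumF1_assoc ha hb hx) (conj s1 s2).
    by split; split=> //; apply: PpD.
- move=> a b x [Pp_a Pp_b ab] Pp_x; case: (Pp_x) => hx _.
  by split; [exact: PpM | exact: PpM | exact: sumF1_mulr].
Qed.

Let Pp_F1_gens : F1_gens S Pp Pp2.
Proof.
split=> [i | | s a b sS ha hb abs]; [exact: PpX | exact: Pp_subsum |].
have [a_s b_s] := subsumD ha hb abs.
by split; [exact: Pp_subsum a_s | exact: Pp_subsum b_s | exact: sumF1_subsum sS ha hb abs].
Qed.

Lemma F1_ind x : P x.
Proof. by case: x => p hp; exact: Pp_holds (hp _ _ Pp_partial_subring Pp_F1_gens). Qed.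

End F1Induction.

Lemma F1_hom_ext (A : partial_ring) (phi psi : F1 S -> A) :
  pr_hom phi -> pr_hom psi -> (forall i, phi (F1_var S i) = psi (F1_var S i)) ->
  forall x, phi x = psi x.
Proof.
move=> [phi0 phi1 phiM phiD] [psi0 psi1 psiM psiD] eq_var.
apply: F1_ind => [| | // | x y ex ey | x y xy ex ey].
- by rewrite phi0 psi0.
- by rewrite phi1 psi1.
- by rewrite phiM psiM ex ey.
- by rewrite (proj2 (phiD _ _ xy)) (proj2 (psiD _ _ xy)) ex ey.
Qed.

End F1Generation.

Section Evaluation.
Variables (A : partial_ring) (n : nat) (c : 'I_n -> A).
Implicit Types (p q : {mpoly int[n]}) (l : seq 'X_{1..n}).

Local Notation ev := (mon_eval c).

Definition pr_evaluable p := pr_summable_seq [seq ev m | m <- mon_list p].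
Definition pr_eval p : A := pr_sum [seq ev m | m <- mon_list p].

Lemma pr_evaluable_perm p l : perm_eq (mon_list p) l ->
  (pr_evaluable p <-> pr_summable_seq (map ev l)) /\
  (pr_evaluable p -> pr_eval p = pr_sum (map ev l)).
Proof.
move=> pl; split; last by move=> hp; have [] := pr_summable_seq_perm pl hp.
split=> [hp | hl]; first by have [] := pr_summable_seq_perm pl hp.
by rewrite perm_sym in pl; have [] := pr_summable_seq_perm pl hl.
Qed.

Lemma pr_eval0 : pr_eval 0 = pr_zero A.
Proof. by rewrite /pr_eval mon_list0. Qed.

Lemma pr_evaluableX m : pr_evaluable 'X_[m] /\ pr_eval 'X_[m] = ev m.
Proof.
have [[_ from_m] eq_m] := pr_evaluable_perm (perm_mon_listX m).
have hX : pr_evaluable 'X_[m] by exact: from_m.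
by split=> //; rewrite eq_m // /pr_sum /= pr_add0l.
Qed.

Lemma pr_evaluableD p q : isN p -> isN q -> pr_evaluable (p + q) ->
  [/\ pr_evaluable p, pr_evaluable q, pr_summable (pr_eval p) (pr_eval q)
    & pr_eval (p + q) = pr_add (pr_eval p) (pr_eval q)].
Proof.
move=> hp hq hpq; have [[to_cat _] eq_cat] := pr_evaluable_perm (perm_mon_listD hp hq).
have := to_cat hpq; rewrite map_cat => s_pq.
have [sp sq spq] := proj1 (pr_summable_seq_cat _ _) s_pq.
by split=> //; rewrite eq_cat // map_cat pr_sum_cat.
Qed.

Lemma pr_evaluableM p q : isN p -> isN q -> pr_evaluable p -> pr_evaluable q ->
  pr_evaluable (p * q) /\ pr_eval (p * q) = pr_mul (pr_eval p) (pr_eval q).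
Proof.
move=> hp hq sp sq; have [[_ from_l] eq_l] := pr_evaluable_perm (perm_mon_listM hp hq).
have [s_pq eq_pq] := pr_summable_seq_allpairs sp sq.
have map_ev : [seq ev m | m <- [seq (m1 + m2)%MM | m1 <- mon_list p, m2 <- mon_list q]] =
    [seq pr_mul a b | a <- map ev (mon_list p), b <- map ev (mon_list q)].
  rewrite map_allpairs allpairs_mapl allpairs_mapr.
  by apply: eq_allpairs => m1 m2; exact: mon_evalD.
rewrite -map_ev in s_pq eq_pq.
have hpq : pr_evaluable (p * q) by exact: from_l.
by split=> //; rewrite eq_l.
Qed.

Definition evaluable_poly p := isN p /\ pr_evaluable p.
Definition evaluable_pair p q := [/\ isN p, isN q & pr_evaluable (p + q)].

Lemma evaluable_partial_subring : partial_subring evaluable_poly evaluable_pair.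
Proof.
split.
- by move=> p [].
- split; first by split; [exact: isN0 | rewrite /pr_evaluable mon_list0].
  by rewrite -mpolyX0; split; [exact: isNX | case: (pr_evaluableX 0)].
- by move=> p q [hp sp] [hq sq]; split; [exact: isNM | case: (pr_evaluableM hp hq sp sq)].
- move=> p q [hp hq spq]; have [sp sq _ _] := pr_evaluableD hp hq spq.
  by split; split=> //; exact: isND.
split.
- by move=> p [hp sp]; split; split=> //; rewrite ?add0r ?addr0 //; exact: isN0.
- by move=> p q [hp hq spq]; split=> //; rewrite addrC.
- move=> a b x [ha _] [hb _] [hx _]; split=> -[[_ _ _] [_ _ s_ab_x]].
  + rewrite -addrA in s_ab_x.
    have [_ s_bx _ _] := pr_evaluableD ha (isND hb hx) s_ab_x.
    by split; split=> //; exact: isND.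
  + rewrite addrA in s_ab_x.
    have [s_ab _ _ _] := pr_evaluableD (isND ha hb) hx s_ab_x.
    by split; split=> //; exact: isND.
- move=> a b x [ha hb s_ab] [hx sx]; split; [exact: isNM | exact: isNM |].
  by rewrite -mulrDl; case: (pr_evaluableM (isND ha hb) hx s_ab sx).
Qed.

Lemma calculable_subsum_evaluable s q : calculable c s -> subsum q s -> pr_evaluable q.
Proof.
move=> cs qs; have [b sb qb] := subsum_mask qs.
have := cs b sb; rewrite -map_mask => s_mask.
by have [[_ from_mask] _] := pr_evaluable_perm qb; exact: from_mask.
Qed.

Variables (S : seq {mpoly int[n]}) (Hcalc : forall s, s \in S -> calculable c s).

Lemma evaluable_F1_gens : F1_gens S evaluable_poly evaluable_pair.
Proof.
split=> [i | s q sS qs | s a b sS ha hb abs].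
- by split; [exact: isNX | case: (pr_evaluableX U_(i))].
- by split; [exact: subsum_isN qs | exact: calculable_subsum_evaluable (Hcalc sS) qs].
- by split=> //; exact: calculable_subsum_evaluable (Hcalc sS) abs.
Qed.

Lemma inF1_evaluable p : inF1 S p -> evaluable_poly p.
Proof. by apply; [exact: evaluable_partial_subring | exact: evaluable_F1_gens]. Qed.

Definition F1_eval (x : F1 S) : A := pr_eval (sval x).

Lemma F1_eval_hom : pr_hom F1_eval.
Proof.
split=> [||[p hp] [q hq]|[p hp] [q hq] pq]; rewrite /F1_eval /=.
- exact: pr_eval0.
- by rewrite -mpolyX0; case: (pr_evaluableX 0) => _ ->; rewrite mon_eval0.
- have [np sp] := inF1_evaluable hp; have [nq sq] := inF1_evaluable hq.
  by case: (pr_evaluableM np nq sp sq).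
- have [np _] := inF1_evaluable hp; have [nq _] := inF1_evaluable hq.
  have [_ s_pq] := inF1_evaluable (sumF1_in pq).
  have [_ _ ? eq_pq] := pr_evaluableD np nq s_pq.
  by split=> //; rewrite F1_addE //; exact: sumF1_in.
Qed.

Lemma F1_eval_var i : F1_eval (F1_var S i) = c i.
Proof. by rewrite /F1_eval /=; case: (pr_evaluableX U_(i)) => _ ->; rewrite mon_evalU. Qed.

End Evaluation.

Theorem mainTheorem6 (n : nat) (A : partial_ring) (c : 'I_n -> A)
    (S : seq {mpoly int[n]})
    (HS : forall s, s \in S -> isN s)
    (Hcalc : forall s, s \in S -> calculable c s) :
  exists phi : F1 S -> A,
    [/\ pr_hom phi,
        (forall i : 'I_n, phi (F1_var S i) = c i) &
        (forall psi : F1 S -> A, pr_hom psi ->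
           (forall i : 'I_n, psi (F1_var S i) = c i) ->
           forall p, psi p = phi p)].
Proof.
exists (@F1_eval A n c S); split; [exact: F1_eval_hom Hcalc | exact: F1_eval_var |].
move=> psi hpsi psi_var; apply: F1_hom_ext (F1_eval_hom Hcalc) _ => // i.
by rewrite psi_var F1_eval_var.
Qed.
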